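(* Let $A$ be a finite set of formulas over the signature of the theory of extensional constant arrays, all of whose literals are flat. If some derivation of the calculus CAEXT starting from the initial configuration $\langle A, \mathcal{I}_0, \pi_0\rangle$ ends in the configuration $\mathsf{unsat}$, then $A$ is unsatisfiable in the theory of extensional constant arrays, i.e. no interpretation satisfying the axioms (row-eq), (row-ne), (ext), (roc) satisfies $A$.
   Context: Theory. Many-sorted first-order logic with equality. There is an index sort $\sigma$, an element sort $\tau$, and an array sort $(\sigma\to\tau)$, with function symbols: read $a[i]$ of type $(\sigma\to\tau)\times\sigma\to\tau$, write $a\langle i\triangleleft u\rangle$ of type $(\sigma\to\tau)\times\sigma\times\tau\to(\sigma\to\tau)$, and constant array $\langle v\rangle$ of type $\tau\to(\sigma\to\tau)$ (no restriction on whether $\sigma$ is finite or infinite). The theory of extensional constant arrays consists of all interpretations satisfying: (row-eq) $\forall a,i,j,u.\ i\approx j\Rightarrow a\langle i\triangleleft u\rangle[j]\approx u$; (row-ne) $\forall a,i,j,u.\ i\not\approx j\Rightarrow a\langle i\triangleleft u\rangle[j]\approx a[j]$; (ext) $\forall a,b.\ a\approx b\Leftrightarrow \forall i.\ a[i]\approx b[i]$; (roc) $\forall i,v.\ \langle v\rangle[i]\approx v$. The empty theory treats all these symbols (and the array sort) as uninterpreted. A literal is flat if it is $\bot$, $p(x_1,\dots,x_n)$, $\neg p(x_1,\dots,x_n)$, $x\approx y$, $x\not\approx y$, or $x\approx f(x_1,\dots,x_n)$ with $x,y,x_i$ uninterpreted constants; array disequalities are written $\neg(a\approx c)$. $T(A)$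 is the set of terms occurring in $A$, and $T_{\mathcal A}(A)$ the set of array terms in $A$. Let $W(A)=\{a\langle i\triangleleft u\rangle[i]\approx u \mid a\langle i\triangleleft u\rangle\in T(A)\}$. Configurations. A configuration is either $\mathsf{unsat}$ or a triple $\langle A,\mathcal I,\pi\rangle$ where $A$ is a set of formulas, $\mathcal I$ is either the special value $\mathcal I_0=\mathsf{none}$ or an interpretation in the empty theory satisfying $A$, and $\pi$ is a map sending pairs $(a,t)$, with $a$ an array term and $t$ either a read term $b[i]$ or a constant array term $\langle v\rangle$, to either the undefined value $()$ or a pair $(r,c)$ with $r$ a formula and $c$ an array term. $\pi_0$ maps every pair to $()$. The initial configuration for $A$ is $\langle A,\mathcal I_0,\pi_0\rangle$. Reasons. For a configuration, $\mathcal R(a,t)$ is defined recursively: $\mathcal R(a,t)=()$ if $\pi(a,t)=()$; otherwise $\mathcal R(a,t)=\top$ if $t=a$ or $t=a[i]$ for some $i$; otherwise $\mathcal R(a,t)=\mathcal R(c,t)\wedge r$ where $\pi(a,t)=(r,c)$. Updated indices: $I(a,\langle v\rangle)=()$ if $\pi(a,\langle v\rangle)=()$; $I(a,\langle v\rangle)=\emptyset$ if $a=\langle v\rangle$; $I(a,\langle v\rangle)=I(b,\langle v\rangle)\cup\{j\}$ if $\pi(a,\langle v\rangle)=(\top,b)$ with $b=a\langle j\triangleleft u\rangle$ or $a=b\langle j\triangleleft u\rangle$ for some $u$; otherwise $I(a,\langle v\rangle)=I(c,\langle v\rangle)$ where $\pi(a,\langle v\rangle)=(r,c)$. ''$\mathcal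 I\models\varphi$'' refers to the current interpretation $\mathcal I$ (evaluated in the empty theory); rules with such a premise apply only when $\mathcal I\neq\mathcal I_0$. ''Reset'' means setting $(\mathcal I,\pi):=(\mathcal I_0,\pi_0)$. Rules of CAEXT (each modifies the current configuration $\langle A,\mathcal I,\pi\rangle$): Interp: if $\mathcal I=\mathcal I_0$ and $\mathcal I'$ is an empty-theory interpretation with $\mathcal I'\models A\cup W(A)$, set $\mathcal I:=\mathcal I'$. Conf: if $A\cup W(A)$ is unsatisfiable in the empty theory, derive $\mathsf{unsat}$. InitR: if $a[i]\in T(A)$, set $\pi(a,a[i]):=(\top,a)$. InitW: if $s=a\langle i\triangleleft u\rangle\in T(A)$, set $\pi(s,s[i]):=(\top,s)$. RowD: if $\mathcal I\models i\not\approx j$, $\pi(a\langle j\triangleleft u\rangle,b[i])\ne()$ and $\pi(a,b[i])=()$, set $\pi(a,b[i]):=(i\not\approx j,\ a\langle j\triangleleft u\rangle)$. RowU: if $\mathcal I\models i\not\approx j$, $a\langle j\triangleleft u\rangle\in T(A)$, $\pi(a,b[i])\ne()$ and $\pi(a\langle j\triangleleft u\rangle,b[i])=()$, set $\pi(a\langle j\triangleleft u\rangle,b[i]):=(i\not\approx j,\ a)$. EqR: if $\mathcal I\models a\approx c$, $a,c\in T_{\mathcal A}(A)$, $a\approx c\in T(A)$, $\pi(a,b[i])\ne()$, $\pi(c,b[i])=()$, set $\pi(c,b[i]):=(a\approx c,a)$. EqL: same premises with roles swapped ($\pi(c,b[i])\ne()$, $\pi(a,b[i])=()$), set $\pi(a,b[i]):=(a\approx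 c,c)$. CongR: if $\mathcal I\models i\approx k$, $\pi(a,b[i])\ne()$, $\pi(a,c[k])\ne()$, $\mathcal I\models b[i]\not\approx c[k]$, add $\mathcal R(a,b[i])\wedge\mathcal R(a,c[k])\wedge i\approx k\Rightarrow b[i]\approx c[k]$ to $A$ and reset. DisEq: if $\mathcal I\models a\not\approx c$, $a,c\in T_{\mathcal A}(A)$, $a\approx c\in T(A)$, and the index constant $k_{\{a,c\}}\notin T(A)$, add $a\not\approx c\Rightarrow a[k_{\{a,c\}}]\not\approx c[k_{\{a,c\}}]$ to $A$ (with $k_{\{a,c\}}$ a fresh index constant associated with the pair) and reset. Roc: if $\pi(\langle v\rangle,b[i])\ne()$ and $\mathcal I\models b[i]\not\approx v$, add $\mathcal R(\langle v\rangle,b[i])\Rightarrow b[i]\approx v$ to $A$ and reset. InitC: if $\langle v\rangle\in T(A)$, set $\pi(\langle v\rangle,\langle v\rangle):=(\top,\langle v\rangle)$. CowD: if $\pi(a\langle j\triangleleft u\rangle,\langle v\rangle)\ne()$, $\pi(a,\langle v\rangle)=()$ and $\mathcal I\models\exists i{:}\sigma.\bigwedge_{k\in I(a\langle j\triangleleft u\rangle,\langle v\rangle)\cup\{j\}} i\not\approx k$, set $\pi(a,\langle v\rangle):=(\top,a\langle j\triangleleft u\rangle)$. CowU: if $\pi(a,\langle v\rangle)\ne()$, $\pi(a\langle j\triangleleft u\rangle,\langle v\rangle)=()$, $a\langle j\triangleleft u\rangle\in T(A)$ and $\mathcal I\models\exists i{:}\sigma.\bigwedge_{k\in I(a,\langle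 v\rangle)\cup\{j\}} i\not\approx k$, set $\pi(a\langle j\triangleleft u\rangle,\langle v\rangle):=(\top,a)$. CEqR: if $\mathcal I\models a\approx c$, $a,c\in T_{\mathcal A}(A)$, $a\approx c\in T(A)$, $\pi(a,\langle v\rangle)\ne()$, $\pi(c,\langle v\rangle)=()$, set $\pi(c,\langle v\rangle):=(a\approx c,a)$. CEqL: same with roles swapped, set $\pi(a,\langle v\rangle):=(a\approx c,c)$. CongC: if $\pi(a,\langle v\rangle)\ne()$, $\pi(a,\langle w\rangle)\ne()$, $\mathcal I\models v\not\approx w$ and $\mathcal I\models\exists i{:}\sigma.\bigwedge_{k\in I(a,\langle v\rangle)\cup I(a,\langle w\rangle)} i\not\approx k$, add $\mathcal R(a,\langle v\rangle)\wedge\mathcal R(a,\langle w\rangle)\wedge\exists i{:}\sigma.\bigwedge_{k\in I(a,\langle v\rangle)\cup I(a,\langle w\rangle)} i\not\approx k\Rightarrow v\approx w$ to $A$ and reset. Conflict rules are CongR, DisEq, Roc, CongC. Whenever a rule introduces non-flat literals, they are flattened with fresh constants. A derivation is a sequence of configurations, starting from an initial one, each obtained from the previous by a rule application. *)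

From Stdlib Require Import List Arith PeanoNat.
Import ListNotations.

Inductive sort : Type := SIdx | SElem | SArr.

Definition sort_eq_dec (s s' : sort) : {s = s'} + {s <> s'}.
Proof. decide equality. Defined.

(** Terms.  [Cst s n]: uninterpreted constant of sort [s];
    [Var s n]: (bound) variable of sort [s];
    [Read a i] = a[i];  [Write a i u] = a<i <| u>;  [CArr v] = <v>;
    [KDiff a c] = the index constant k_{a,c} associated with the pair (a,c)
    (an uninterpreted constant *symbol*; a, c are only part of its name). *)
Inductive term : Type :=
| Cst (s : sort) (n : nat)
| Var (s : sort) (n : nat)
| Read (a i : term)
| Write (a i u : term)
| CArr (v : term)
| KDiff (a c : term).

Definition term_eq_dec (t t' : term) : {t = t'} + {t <> t'}.
Proof. decide equality; try apply sort_eq_dec; apply Nat.eq_dec. Defined.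

Definition sort_of (t : term) : sort :=
  match t with
  | Cst s _ | Var s _ => s
  | Read _ _ => SElem
  | Write _ _ _ | CArr _ => SArr
  | KDiff _ _ => SIdx
  end.

Fixpoint wfT (t : term) : Prop :=
  match t with
  | Cst _ _ | Var _ _ => True
  | Read a i => wfT a /\ wfT i /\ sort_of a = SArr /\ sort_of i = SIdx
  | Write a i u => wfT a /\ wfT i /\ wfT u /\
      sort_of a = SArr /\ sort_of i = SIdx /\ sort_of u = SElem
  | CArr v => wfT v /\ sort_of v = SElem
  | KDiff a c => wfT a /\ wfT c /\ sort_of a = SArr /\ sort_of c = SArr
  end.

Inductive formula : Type :=
| FBot | FTop
| FEq (t1 t2 : term)
| FNot (f : formula)
| FAnd (f g : formula) | FOr (f g : formula) | FImp (f g : formula)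
| FEx (s : sort) (n : nat) (f : formula)
| FAll (s : sort) (n : nat) (f : formula).

Fixpoint wfF (f : formula) : Prop :=
  match f with
  | FBot | FTop => True
  | FEq t1 t2 => wfT t1 /\ wfT t2 /\ sort_of t1 = sort_of t2
  | FNot g => wfF g
  | FAnd g h | FOr g h | FImp g h => wfF g /\ wfF h
  | FEx _ _ g | FAll _ _ g => wfF g
  end.

(** Subterms (the arguments of a name k_{a,c} are not subterms). *)
Fixpoint subterms (t : term) : list term :=
  t :: match t with
       | Cst _ _ | Var _ _ | KDiff _ _ => []
       | Read a i => subterms a ++ subterms i
       | Write a i u => subterms a ++ subterms i ++ subterms u
       | CArr v => subterms v
       end.

Fixpoint fterms (f : formula) : list term :=
  match f with
  | FBot | FTop => []
  | FEq t1 t2 => subterms t1 ++ subterms t2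
  | FNot g => fterms g
  | FAnd g h | FOr g h | FImp g h => fterms g ++ fterms h
  | FEx _ _ g | FAll _ _ g => fterms g
  end.

Fixpoint atoms (f : formula) : list (term * term) :=
  match f with
  | FBot | FTop => []
  | FEq t1 t2 => [(t1, t2)]
  | FNot g => atoms g
  | FAnd g h | FOr g h | FImp g h => atoms g ++ atoms h
  | FEx _ _ g | FAll _ _ g => atoms g
  end.

Definition InT (t : term) (A : list formula) : Prop :=
  exists f, In f A /\ In t (fterms f).
Definition InArr (t : term) (A : list formula) : Prop :=
  InT t A /\ sort_of t = SArr.
Definition InAtom (a c : term) (A : list formula) : Prop :=
  exists f, In f A /\ In (a, c) (atoms f).

Definition isName (t : term) : Prop :=
  match t with Cst _ _ | Var _ _ | KDiff _ _ => True | _ => False end.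

Definition flatApp (t : term) : Prop :=
  match t with
  | Read a i => isName a /\ isName i
  | Write a i u => isName a /\ isName i /\ isName u
  | CArr v => isName v
  | _ => False
  end.

(** All literals of the formula are flat: positive literals x ≈ y or
    x ≈ f(x1,..,xn), negative literals ¬(x ≈ y), and ⊥ (⊤ is a logical
    constant and is allowed). *)
Fixpoint flatF (f : formula) : Prop :=
  match f with
  | FBot | FTop => True
  | FEq t1 t2 => isName t1 /\ (isName t2 \/ flatApp t2)
  | FNot g =>
      match g with
      | FEq t1 t2 => isName t1 /\ isName t2
      | _ => flatF g
      end
  | FAnd g h | FOr g h | FImp g h => flatF g /\ flatF h
  | FEx _ _ g | FAll _ _ g => flatF g
  end.

(** * Semantics (interpretations in the empty theory) *)

Record Interp : Type := {
  dom : sort -> Type;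
  dflt : forall s, dom s;                      (* domains are nonempty *)
  cst : forall s, nat -> dom s;
  kdf : term -> term -> dom SIdx;
  rd : dom SArr -> dom SIdx -> dom SElem;
  wr : dom SArr -> dom SIdx -> dom SElem -> dom SArr;
  ca : dom SElem -> dom SArr
}.

(* Coercion between sorts (identity on well-sorted terms). *)
Definition co (I : Interp) {s : sort} (s' : sort) (x : dom I s) : dom I s' :=
  match sort_eq_dec s s' with
  | left e => eq_rect s (dom I) x s' e
  | right _ => dflt I s'
  end.

Definition env (I : Interp) := forall s : sort, nat -> dom I s.

Fixpoint ev (I : Interp) (rho : env I) (t : term) {struct t} : dom I (sort_of t) :=
  match t as t0 return dom I (sort_of t0) with
  | Cst s n => cst I s n
  | Var s n => rho s n
  | Read a i => rd I (co I SArr (ev I rho a)) (co I SIdx (ev I rho i))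
  | Write a i u =>
      wr I (co I SArr (ev I rho a)) (co I SIdx (ev I rho i)) (co I SElem (ev I rho u))
  | CArr v => ca I (co I SElem (ev I rho v))
  | KDiff a c => kdf I a c
  end.

Definition upd_env (I : Interp) (rho : env I) (s : sort) (n : nat) (d : dom I s) : env I :=
  fun s' n' =>
    match sort_eq_dec s s' with
    | left e => if Nat.eqb n n' then eq_rect s (dom I) d s' e else rho s' n'
    | right _ => rho s' n'
    end.

Fixpoint holds (I : Interp) (rho : env I) (f : formula) : Prop :=
  match f with
  | FBot => False
  | FTop => True
  | FEq t1 t2 => ev I rho t1 = co I (sort_of t1) (ev I rho t2)
  | FNot g => ~ holds I rho g
  | FAnd g h => holds I rho g /\ holds I rho h
  | FOr g h => holds I rho g \/ holds I rho h
  | FImp g h => holds I rho g -> holds I rho h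
  | FEx s n g => exists d : dom I s, holds I (upd_env I rho s n d) g
  | FAll s n g => forall d : dom I s, holds I (upd_env I rho s n d) g
  end.

(** I ⊨ f (universal closure). *)
Definition modelsF (I : Interp) (f : formula) : Prop := forall rho, holds I rho f.
Definition modelsA (I : Interp) (A : list formula) : Prop :=
  forall f, In f A -> modelsF I f.

Definition modelsW (I : Interp) (A : list formula) : Prop :=
  forall a i u, InT (Write a i u) A ->
    modelsF I (FEq (Read (Write a i u) i) u).

Definition EmptySatW (A : list formula) : Prop :=
  exists I, modelsA I A /\ modelsW I A.

Definition ArrModel (I : Interp) : Prop :=
  (forall a i j u, i = j -> rd I (wr I a i u) j = u) /\
  (forall a i j u, i <> j -> rd I (wr I a i u) j = rd I a j) /\
  (forall a b, a = b <-> (forall i, rd I a i = rd I b i)) /\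
  (forall i v, rd I (ca I v) i = v).

Definition ArrSat (A : list formula) : Prop :=
  exists I, ArrModel I /\ modelsA I A.

Fixpoint maxv (t : term) : nat :=
  match t with
  | Var _ n => S n
  | Cst _ _ | KDiff _ _ => 0
  | Read a i => Nat.max (maxv a) (maxv i)
  | Write a i u => Nat.max (maxv a) (Nat.max (maxv i) (maxv u))
  | CArr v => maxv v
  end.

Definition freshv (S : list term) : nat :=
  fold_right (fun t m => Nat.max (maxv t) m) 0 S.

Definition bigand (l : list formula) : formula := fold_right FAnd FTop l.

(** ∃ i:σ. ⋀_{k ∈ S} i ≉ k  (with a bound variable not occurring in S). *)
Definition exdiff (S : list term) : formula :=
  let n := freshv S in
  FEx SIdx n (bigand (map (fun k => FNot (FEq (Var SIdx n) k)) S)).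

Fixpoint substT (x t s : term) : term :=
  if term_eq_dec s x then t else
  match s with
  | Read a i => Read (substT x t a) (substT x t i)
  | Write a i u => Write (substT x t a) (substT x t i) (substT x t u)
  | CArr v => CArr (substT x t v)
  | _ => s
  end.

Fixpoint substF (x t : term) (f : formula) : formula :=
  match f with
  | FBot => FBot | FTop => FTop
  | FEq t1 t2 => FEq (substT x t t1) (substT x t t2)
  | FNot g => FNot (substF x t g)
  | FAnd g h => FAnd (substF x t g) (substF x t h)
  | FOr g h => FOr (substF x t g) (substF x t h)
  | FImp g h => FImp (substF x t g) (substF x t h)
  | FEx s n g => FEx s n (substF x t g)
  | FAll s n g => FAll s n (substF x t g)
  end.

Definition expand (defs : list (term * term)) (f : formula) : formula :=
  fold_left (fun g d => substF (fst d) (snd d) g) defs f.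

Definition noVars (t : term) : Prop :=
  forall s n, ~ In (Var s n) (subterms t).

Definition Flatten (A : list formula) (f : formula) (F : list formula) : Prop :=
  exists (f' : formula) (defs : list (term * term)),
    F = f' :: map (fun d => FEq (fst d) (snd d)) defs /\
    (forall d, In d defs ->
       (exists s n, fst d = Cst s n /\ ~ InT (Cst s n) A /\ ~ In (Cst s n) (fterms f)) /\
       sort_of (fst d) = sort_of (snd d) /\ wfT (snd d) /\ noVars (snd d)) /\
    NoDup (map fst defs) /\
    expand defs f' = f /\
    (forall g, In g F -> flatF g).

Definition pimap := term -> term -> option (formula * term).

Definition pi0 : pimap := fun _ _ => None.

Definition upd (pi : pimap) (a t : term) (v : option (formula * term)) : pimap :=
  fun a' t' =>
    if term_eq_dec a a' then (if term_eq_dec t t' then v else pi a' t') else pi a' t'.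

Inductive config : Type :=
| Unsat
| Cfg (A : list formula) (I : option Interp) (pi : pimap).

(** Reasons R(a,t) (relationally; defined case only). *)
Inductive Reason (pi : pimap) : term -> term -> formula -> Prop :=
| R_base : forall a t,
    pi a t <> None -> (t = a \/ exists i, t = Read a i) -> Reason pi a t FTop
| R_step : forall a t r c R,
    pi a t = Some (r, c) -> ~ (t = a \/ exists i, t = Read a i) ->
    Reason pi c t R -> Reason pi a t (FAnd R r).

(** Updated indices I(a, <v>) (here [t] is the term <v>). *)
Inductive UpdIdx (pi : pimap) : term -> term -> list term -> Prop :=
| U_base : forall a t, pi a t <> None -> a = t -> UpdIdx pi a t []
| U_write : forall a t b j u S,
    pi a t = Some (FTop, b) -> a <> t ->
    (b = Write a j u \/ a = Write b j u) ->
    UpdIdx pi b t S -> UpdIdx pi a t (j :: S)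
| U_other : forall a t r c S,
    pi a t = Some (r, c) -> a <> t ->
    ~ (r = FTop /\ exists j u, c = Write a j u \/ a = Write c j u) ->
    UpdIdx pi c t S -> UpdIdx pi a t S.

(** "I ⊨ f" for the current interpretation (requires I ≠ I_0). *)
Definition Js (I : option Interp) (f : formula) : Prop :=
  exists J, I = Some J /\ modelsF J f.

Definition neqF (x y : term) : formula := FNot (FEq x y).

Inductive step : config -> config -> Prop :=
| sInterp : forall A pi J,
    modelsA J A -> modelsW J A ->
    step (Cfg A None pi) (Cfg A (Some J) pi)
| sConf : forall A I pi,
    ~ EmptySatW A -> step (Cfg A I pi) Unsat
| sInitR : forall A I pi a i,
    InT (Read a i) A ->
    step (Cfg A I pi) (Cfg A I (upd pi a (Read a i) (Some (FTop, a))))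
| sInitW : forall A I pi a i u,
    InT (Write a i u) A ->
    step (Cfg A I pi)
      (Cfg A I (upd pi (Write a i u) (Read (Write a i u) i) (Some (FTop, Write a i u))))
| sRowD : forall A I pi a j u b i,
    Js I (neqF i j) ->
    pi (Write a j u) (Read b i) <> None -> pi a (Read b i) = None ->
    step (Cfg A I pi) (Cfg A I (upd pi a (Read b i) (Some (neqF i j, Write a j u))))
| sRowU : forall A I pi a j u b i,
    Js I (neqF i j) -> InT (Write a j u) A ->
    pi a (Read b i) <> None -> pi (Write a j u) (Read b i) = None ->
    step (Cfg A I pi) (Cfg A I (upd pi (Write a j u) (Read b i) (Some (neqF i j, a))))
| sEqR : forall A I pi a c b i,
    Js I (FEq a c) -> InArr a A -> InArr c A -> InAtom a c A ->
    pi a (Read b i) <> None -> pi c (Read b i) = None ->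
    step (Cfg A I pi) (Cfg A I (upd pi c (Read b i) (Some (FEq a c, a))))
| sEqL : forall A I pi a c b i,
    Js I (FEq a c) -> InArr a A -> InArr c A -> InAtom a c A ->
    pi c (Read b i) <> None -> pi a (Read b i) = None ->
    step (Cfg A I pi) (Cfg A I (upd pi a (Read b i) (Some (FEq a c, c))))
| sCongR : forall A I pi a b i c k R1 R2 F,
    Js I (FEq i k) ->
    pi a (Read b i) <> None -> pi a (Read c k) <> None ->
    Js I (neqF (Read b i) (Read c k)) ->
    Reason pi a (Read b i) R1 -> Reason pi a (Read c k) R2 ->
    Flatten A (FImp (FAnd (FAnd R1 R2) (FEq i k)) (FEq (Read b i) (Read c k))) F ->
    step (Cfg A I pi) (Cfg (A ++ F) None pi0)
| sDisEq : forall A I pi a c F,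
    Js I (neqF a c) -> InArr a A -> InArr c A -> InAtom a c A ->
    ~ InT (KDiff a c) A -> ~ InT (KDiff c a) A ->
    Flatten A (FImp (neqF a c) (neqF (Read a (KDiff a c)) (Read c (KDiff a c)))) F ->
    step (Cfg A I pi) (Cfg (A ++ F) None pi0)
| sRoc : forall A I pi v b i R F,
    pi (CArr v) (Read b i) <> None ->
    Js I (neqF (Read b i) v) ->
    Reason pi (CArr v) (Read b i) R ->
    Flatten A (FImp R (FEq (Read b i) v)) F ->
    step (Cfg A I pi) (Cfg (A ++ F) None pi0)
| sInitC : forall A I pi v,
    InT (CArr v) A ->
    step (Cfg A I pi) (Cfg A I (upd pi (CArr v) (CArr v) (Some (FTop, CArr v))))
| sCowD : forall A I pi a j u v S,
    pi (Write a j u) (CArr v) <> None -> pi a (CArr v) = None ->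
    UpdIdx pi (Write a j u) (CArr v) S ->
    Js I (exdiff (j :: S)) ->
    step (Cfg A I pi) (Cfg A I (upd pi a (CArr v) (Some (FTop, Write a j u))))
| sCowU : forall A I pi a j u v S,
    pi a (CArr v) <> None -> pi (Write a j u) (CArr v) = None ->
    InT (Write a j u) A ->
    UpdIdx pi a (CArr v) S ->
    Js I (exdiff (j :: S)) ->
    step (Cfg A I pi) (Cfg A I (upd pi (Write a j u) (CArr v) (Some (FTop, a))))
| sCEqR : forall A I pi a c v,
    Js I (FEq a c) -> InArr a A -> InArr c A -> InAtom a c A ->
    pi a (CArr v) <> None -> pi c (CArr v) = None ->
    step (Cfg A I pi) (Cfg A I (upd pi c (CArr v) (Some (FEq a c, a))))
| sCEqL : forall A I pi a c v,
    Js I (FEq a c) -> InArr a A -> InArr c A -> InAtom a c A ->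
    pi c (CArr v) <> None -> pi a (CArr v) = None ->
    step (Cfg A I pi) (Cfg A I (upd pi a (CArr v) (Some (FEq a c, c))))
| sCongC : forall A I pi a v w S1 S2 R1 R2 F,
    pi a (CArr v) <> None -> pi a (CArr w) <> None ->
    Js I (neqF v w) ->
    UpdIdx pi a (CArr v) S1 -> UpdIdx pi a (CArr w) S2 ->
    Js I (exdiff (S1 ++ S2)) ->
    Reason pi a (CArr v) R1 -> Reason pi a (CArr w) R2 ->
    Flatten A (FImp (FAnd (FAnd R1 R2) (exdiff (S1 ++ S2))) (FEq v w)) F ->
    step (Cfg A I pi) (Cfg (A ++ F) None pi0).

Inductive derives : config -> config -> Prop :=
| d_refl : forall c, derives c c
| d_step : forall c1 c2 c3, step c1 c2 -> derives c2 c3 -> derives c1 c3.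

(* Every configuration reachable from <A, I_0, pi_0> is sound: its formulas
   are well sorted, they have a model of the array axioms, and each entry of
   pi is justified by its reason in every such model (the two linked arrays
   agree at the read index, resp. agree off the updated indices or are equal
   for constant-array entries).  Conf is then blocked, because an array model
   also satisfies W(A).  The conflict rules CongR, Roc and CongC add lemmas
   valid in every array model, and the DisEq lemma becomes true once k_{a,c}
   is reinterpreted as an index where a and c differ.  Adding a flattening of
   such a lemma preserves satisfiability, since any system of flat definitions
   of fresh constants can be solved in a model of the array axioms. *)

From Stdlib Require Import List PeanoNat Lia Eqdep_dec Classical ClassicalEpsilon.
Import ListNotations.

Opaque term_eq_dec.

Lemma sort_UIP (s : sort) (e : s = s) : e = eq_refl.
Proof. apply UIP_dec, sort_eq_dec. Qed.

Lemma co_id I s (x : dom I s) : co I s x = x.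
Proof.
  unfold co. destruct (sort_eq_dec s s) as [e|n]; [|congruence].
  now rewrite (sort_UIP s e).
Qed.

Lemma existT_dom_inj I s (x y : dom I s) :
  existT (dom I) s x = existT (dom I) s y -> x = y.
Proof. apply inj_pair2_eq_dec, sort_eq_dec. Qed.

Lemma co_existT I s s1 s2 (v1 : dom I s1) (v2 : dom I s2) :
  existT (dom I) s1 v1 = existT (dom I) s2 v2 -> co I s v1 = co I s v2.
Proof.
  intros E. assert (s1 = s2) by exact (f_equal (@projT1 _ _) E). subst.
  apply existT_dom_inj in E. now subst.
Qed.

Lemma feq_existT_iff I s1 s1' s2 s2' (v1 : dom I s1) (v1' : dom I s1')
  (v2 : dom I s2) (v2' : dom I s2') :
  existT (dom I) s1 v1 = existT (dom I) s1' v1' ->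
  existT (dom I) s2 v2 = existT (dom I) s2' v2' ->
  v1 = co I s1 v2 <-> v1' = co I s1' v2'.
Proof.
  intros E1 E2. assert (s1 = s1') by exact (f_equal (@projT1 _ _) E1). subst.
  apply existT_dom_inj in E1. subst. now rewrite (co_existT I s1' _ _ v2 v2' E2).
Qed.

Lemma feq_co_iff I s1 s2 s (v1 : dom I s1) (v2 : dom I s2) :
  s1 = s -> s2 = s -> v1 = co I s1 v2 <-> co I s v1 = co I s v2.
Proof. intros -> ->. now rewrite !co_id. Qed.

Lemma existT_of_feq I s1 s2 (v1 : dom I s1) (v2 : dom I s2) :
  s1 = s2 -> v1 = co I s1 v2 -> existT (dom I) s1 v1 = existT (dom I) s2 v2.
Proof. intros -> ->. now rewrite co_id. Qed.

Lemma feq_of_existT I s1 s2 (v1 : dom I s1) (v2 : dom I s2) :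
  existT (dom I) s1 v1 = existT (dom I) s2 v2 -> v1 = co I s1 v2.
Proof.
  intros E. assert (s1 = s2) by exact (f_equal (@projT1 _ _) E). subst.
  apply existT_dom_inj in E. subst. now rewrite co_id.
Qed.

Definition pval (I : Interp) (rho : env I) (t : term) : sigT (dom I) :=
  existT (dom I) (sort_of t) (ev I rho t).

Lemma ev_upd_env_fresh I rho s n d t :
  maxv t <= n -> ev I (upd_env I rho s n d) t = ev I rho t.
Proof.
  induction t; simpl; intros H; try reflexivity.
  - unfold upd_env. destruct (sort_eq_dec s s0); auto.
    destruct (Nat.eqb_spec n n0); auto. lia.
  - rewrite IHt1, IHt2 by lia. reflexivity.
  - rewrite IHt1, IHt2, IHt3 by lia. reflexivity.
  - rewrite IHt by lia. reflexivity.
Qed.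

Lemma upd_env_eq I rho s n d : upd_env I rho s n d s n = d.
Proof.
  unfold upd_env. destruct (sort_eq_dec s s) as [e|]; [|congruence].
  rewrite Nat.eqb_refl, (sort_UIP s e). reflexivity.
Qed.

Fixpoint ground (t : term) : Prop :=
  match t with
  | Var _ _ => False
  | Cst _ _ | KDiff _ _ => True
  | Read a i => ground a /\ ground i
  | Write a i u => ground a /\ ground i /\ ground u
  | CArr v => ground v
  end.

Lemma noVars_ground t : noVars t -> ground t.
Proof.
  unfold noVars. induction t; simpl; intros H; auto.
  - apply (H s n). now left.
  - split; [apply IHt1|apply IHt2]; intros s n Hin; apply (H s n); right;
      apply in_or_app; auto.
  - split; [apply IHt1|split; [apply IHt2|apply IHt3]]; intros s n Hin;
      apply (H s n); right; rewrite !in_app_iff; auto.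
  - apply IHt. intros s n Hin. apply (H s n). now right.
Qed.

Lemma ev_ground I t : ground t -> forall rho rho', ev I rho t = ev I rho' t.
Proof.
  induction t; simpl; intros H rho rho'; try tauto.
  - destruct H. now rewrite (IHt1 H rho rho'), (IHt2 H0 rho rho').
  - destruct H as (?&?&?).
    now rewrite (IHt1 H rho rho'), (IHt2 H0 rho rho'), (IHt3 H1 rho rho').
  - now rewrite (IHt H rho rho').
Qed.

Definition reinterp (I : Interp) (c : forall s, nat -> dom I s)
    (k : term -> term -> dom I SIdx) : Interp :=
  {| dom := dom I; dflt := dflt I; cst := c; kdf := k;
     rd := rd I; wr := wr I; ca := ca I |}.

Ltac in_app := first [assumption | apply in_or_app; left; in_app
                                 | apply in_or_app; right; in_app].

Lemma ev_reinterp I c k t (rho : env I) :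
  (forall s n, In (Cst s n) (subterms t) -> c s n = cst I s n) ->
  (forall x y, In (KDiff x y) (subterms t) -> k x y = kdf I x y) ->
  ev (reinterp I c k) rho t = ev I rho t.
Proof.
  induction t; simpl; intros Hc Hk.
  - apply Hc; auto.
  - reflexivity.
  - rewrite IHt1, IHt2; [reflexivity|..];
      intros; first [apply Hc|apply Hk]; right; in_app.
  - rewrite IHt1, IHt2, IHt3; [reflexivity|..];
      intros; first [apply Hc|apply Hk]; right; in_app.
  - rewrite IHt; [reflexivity|..]; intros; first [apply Hc|apply Hk]; right; in_app.
  - apply Hk; auto.
Qed.

Lemma holds_reinterp I c k g (rho : env I) :
  (forall s n, In (Cst s n) (fterms g) -> c s n = cst I s n) ->
  (forall x y, In (KDiff x y) (fterms g) -> k x y = kdf I x y) ->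
  holds (reinterp I c k) rho g <-> holds I rho g.
Proof.
  revert rho. induction g; simpl; intros rho Hc Hk; try tauto.
  - rewrite (ev_reinterp I c k t1), (ev_reinterp I c k t2); [reflexivity|..];
      intros; first [apply Hc|apply Hk]; in_app.
  - rewrite IHg; tauto.
  - rewrite IHg1, IHg2; [tauto|..]; intros; first [apply Hc|apply Hk]; in_app.
  - rewrite IHg1, IHg2; [tauto|..]; intros; first [apply Hc|apply Hk]; in_app.
  - rewrite IHg1, IHg2; [tauto|..]; intros; first [apply Hc|apply Hk]; in_app.
  - split; intros [d Hd]; exists d; apply (IHg _ Hc Hk), Hd.
  - split; intros Hd d; apply (IHg _ Hc Hk), Hd.
Qed.

Fixpoint mapF (h : term -> term) (f : formula) : formula :=
  match f with
  | FBot => FBot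
  | FTop => FTop
  | FEq t1 t2 => FEq (h t1) (h t2)
  | FNot g => FNot (mapF h g)
  | FAnd g1 g2 => FAnd (mapF h g1) (mapF h g2)
  | FOr g1 g2 => FOr (mapF h g1) (mapF h g2)
  | FImp g1 g2 => FImp (mapF h g1) (mapF h g2)
  | FEx s n g => FEx s n (mapF h g)
  | FAll s n g => FAll s n (mapF h g)
  end.

Definition expandT (defs : list (term * term)) (t : term) : term :=
  fold_left (fun s d => substT (fst d) (snd d) s) defs t.

Lemma mapF_id f : mapF (fun s => s) f = f.
Proof. induction f; simpl; congruence. Qed.

Lemma mapF_substF h x t f :
  mapF h (substF x t f) = mapF (fun s => h (substT x t s)) f.
Proof. induction f; simpl; congruence. Qed.

Lemma expand_mapF defs f : expand defs f = mapF (expandT defs) f.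
Proof.
  unfold expand. revert f. induction defs as [|d defs IH]; intros f; simpl.
  - symmetry. apply mapF_id.
  - rewrite IH, mapF_substF. reflexivity.
Qed.

Lemma holds_mapF I h : (forall rho s, pval I rho (h s) = pval I rho s) ->
  forall f rho, holds I rho (mapF h f) <-> holds I rho f.
Proof.
  intros Hh f. induction f; simpl; intros rho; try tauto.
  - apply feq_existT_iff; apply Hh.
  - rewrite IHf. tauto.
  - rewrite IHf1, IHf2. tauto.
  - rewrite IHf1, IHf2. tauto.
  - rewrite IHf1, IHf2. tauto.
  - split; intros [d Hd]; exists d; apply IHf, Hd.
  - split; intros Hd d; apply IHf, Hd.
Qed.

Lemma wfF_mapF_rev h : (forall s, sort_of (h s) = sort_of s) ->
  (forall s, wfT (h s) -> wfT s) -> forall f, wfF (mapF h f) -> wfF f.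
Proof.
  intros Hs Hw f. induction f; simpl; try tauto.
  rewrite !Hs. intros (?&?&?). auto.
Qed.

Ltac case_term_eq := match goal with |- context [term_eq_dec ?a ?b] => destruct (term_eq_dec a b) end.

Lemma sort_substT x t s :
  sort_of t = sort_of x -> sort_of (substT x t s) = sort_of s.
Proof. intros H. destruct s; simpl; case_term_eq; subst; auto. Qed.

Lemma pval_substT I rho x t s :
  pval I rho x = pval I rho t -> pval I rho (substT x t s) = pval I rho s.
Proof.
  unfold pval. intros H. induction s; simpl; case_term_eq;
    try (subst; symmetry; exact H); try reflexivity; simpl.
  - now rewrite (co_existT _ SArr _ _ _ _ IHs1), (co_existT _ SIdx _ _ _ _ IHs2).
  - now rewrite (co_existT _ SArr _ _ _ _ IHs1), (co_existT _ SIdx _ _ _ _ IHs2),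
      (co_existT _ SElem _ _ _ _ IHs3).
  - now rewrite (co_existT _ SElem _ _ _ _ IHs).
Qed.

Lemma wfT_substT_rev x t s :
  wfT x -> sort_of t = sort_of x -> wfT (substT x t s) -> wfT s.
Proof.
  intros Hx Hs. induction s; simpl; case_term_eq; try (subst; auto; fail); simpl; intuition;
  repeat match goal with H : context [sort_of (substT x t ?a)] |- _ =>
    rewrite (sort_substT x t a Hs) in H end; auto.
Qed.

Lemma ground_substT x t s : ground t -> ground s -> ground (substT x t s).
Proof. intros Ht. induction s; simpl; case_term_eq; simpl; intuition. Qed.

Lemma pval_expandT I defs :
  (forall d, In d defs -> forall rho, pval I rho (fst d) = pval I rho (snd d)) ->
  forall rho s, pval I rho (expandT defs s) = pval I rho s.
Proof.
  unfold expandT. induction defs as [|d ds IH]; intros Hd rho s; simpl; auto.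
  rewrite IH by (intros; apply Hd; now right). apply pval_substT, Hd. now left.
Qed.

Lemma holds_expand I defs :
  (forall d, In d defs -> forall rho, pval I rho (fst d) = pval I rho (snd d)) ->
  forall f rho, holds I rho (expand defs f) <-> holds I rho f.
Proof.
  intros Hd f rho. rewrite expand_mapF. apply holds_mapF. now apply pval_expandT.
Qed.

Definition defs_wf (defs : list (term * term)) : Prop :=
  forall d, In d defs -> wfT (fst d) /\ sort_of (snd d) = sort_of (fst d).

Lemma defs_wf_tail d defs : defs_wf (d :: defs) -> defs_wf defs.
Proof. intros H d' Hd'. apply H. now right. Qed.

Lemma sort_expandT defs s : defs_wf defs -> sort_of (expandT defs s) = sort_of s.
Proof.
  unfold expandT. revert s. induction defs as [|d ds IH]; intros s Hd; simpl; auto.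
  rewrite IH by now apply defs_wf_tail with d. apply sort_substT, Hd. now left.
Qed.

Lemma wfT_expandT_rev defs s : defs_wf defs -> wfT (expandT defs s) -> wfT s.
Proof.
  unfold expandT. revert s. induction defs as [|d ds IH]; intros s Hd; simpl; auto.
  destruct (Hd d) as [Hw Hs]; [now left|].
  intros H. apply (wfT_substT_rev (fst d) (snd d)); auto.
  apply IH; auto. now apply defs_wf_tail with d.
Qed.

Lemma wfF_expand_rev defs f : defs_wf defs -> wfF (expand defs f) -> wfF f.
Proof.
  intros Hd. rewrite expand_mapF. apply wfF_mapF_rev; intros s.
  - now apply sort_expandT.
  - now apply wfT_expandT_rev.
Qed.

Lemma ground_expandT defs s :
  (forall d, In d defs -> ground (snd d)) -> ground s -> ground (expandT defs s).
Proof.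
  unfold expandT. revert s. induction defs as [|d ds IH]; intros s Hd Hs; simpl; auto.
  apply IH.
  - intros d' Hd'. apply Hd. now right.
  - apply ground_substT; auto. apply Hd. now left.
Qed.

Lemma expandT_Var defs s n :
  (forall d, In d defs -> exists s' n', fst d = Cst s' n') ->
  expandT defs (Var s n) = Var s n.
Proof.
  unfold expandT. induction defs as [|d ds IH]; intros Hd; simpl; auto.
  destruct (Hd d) as (s'&n'&->); [now left|]. simpl.
  destruct (term_eq_dec (Var s n) (Cst s' n')); [discriminate|].
  apply IH. intros d' Hd'. apply Hd. now right.
Qed.

Lemma wfT_subterms t u : wfT t -> In u (subterms t) -> wfT u.
Proof.
  induction t; simpl; intros Hw Hu; destruct Hu as [Hu|Hu]; subst; simpl; auto;
    try contradiction; intuition;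
    repeat (apply in_app_or in Hu; destruct Hu as [Hu|Hu]); eauto.
Qed.

Lemma wfF_fterms g t : wfF g -> In t (fterms g) -> wfT t.
Proof.
  induction g; simpl; intros Hw Ht; try contradiction; intuition;
    apply in_app_or in Ht; destruct Ht; eauto using wfT_subterms.
Qed.

Lemma wfT_InT A t : (forall f, In f A -> wfF f) -> InT t A -> wfT t.
Proof. intros HA [f [Hf Ht]]. eapply wfF_fterms; eauto. Qed.

(** * Solving flat definitions in a model of the array axioms *)

Section Chains.
Variables (C V : Type) (next : C -> C + V).

Inductive Reaches : C -> V -> Prop :=
| reaches_now c v : next c = inr v -> Reaches c v
| reaches_later c c' v : next c = inl c' -> Reaches c' v -> Reaches c v.

Lemma Reaches_fun c v : Reaches c v -> forall v', Reaches c v' -> v = v'.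
Proof.
  induction 1 as [c v E|c c' v E _ IH]; intros v' H'; inversion H'; subst; try congruence.
  apply IH. congruence.
Qed.

Variable dv : V.

(* [dv] is the junk value of the diverging chains. *)
Definition chain_value (c : C) : V :=
  match excluded_middle_informative (exists v, Reaches c v) with
  | left H => proj1_sig (constructive_indefinite_description _ H)
  | right _ => dv
  end.

Lemma chain_value_Reaches c v : Reaches c v -> chain_value c = v.
Proof.
  intros H. unfold chain_value. destruct excluded_middle_informative as [e|n].
  - destruct constructive_indefinite_description as [w Hw]. simpl. eapply Reaches_fun; eauto.
  - exfalso; eauto.
Qed.

Lemma chain_value_diverge c : ~ (exists v, Reaches c v) -> chain_value c = dv.
Proof. intros H. unfold chain_value. destruct excluded_middle_informative; tauto. Qed.

Lemma chain_value_unfold c :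
  chain_value c = match next c with inl c' => chain_value c' | inr v => v end.
Proof.
  destruct (next c) as [c'|v] eqn:E.
  - destruct (classic (exists v, Reaches c' v)) as [[v Hv]|N].
    + rewrite (chain_value_Reaches c' v Hv). apply chain_value_Reaches.
      eapply reaches_later; eauto.
    + rewrite (chain_value_diverge c' N). apply chain_value_diverge. intros [v Hv].
      inversion Hv; subst; [congruence|].
      apply N. exists v. congruence.
  - apply chain_value_Reaches, reaches_now, E.
Qed.

End Chains.

Arguments Reaches {C V}.
Arguments chain_value {C V}.

Section Simulation.
Variables (C1 V1 C2 V2 : Type) (next1 : C1 -> C1 + V1) (next2 : C2 -> C2 + V2).
Variables (h : C1 -> C2) (F : V1 -> V2) (dv1 : V1) (dv2 : V2).
Hypothesis next_sim : forall x m, next1 x = inl m -> next2 (h x) = inl (h m).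

Lemma Reaches_sim c v :
  Reaches next2 c v -> forall x, c = h x -> exists B, Reaches next1 x B.
Proof.
  induction 1 as [c v E|c c' v E _ IH]; intros x ->;
    destruct (next1 x) as [m|B] eqn:E1; eauto using reaches_now.
  - rewrite (next_sim x m E1) in E. discriminate.
  - rewrite (next_sim x m E1) in E. injection E as <-.
    destruct (IH m eq_refl) as [B HB]. eauto using reaches_later.
Qed.

Hypothesis value_sim : forall x B, next1 x = inr B -> chain_value next2 dv2 (h x) = F B.
Hypothesis default_sim : F dv1 = dv2.

Lemma chain_value_sim x : chain_value next2 dv2 (h x) = F (chain_value next1 dv1 x).
Proof.
  destruct (classic (exists B, Reaches next1 x B)) as [[B HB]|N].
  - rewrite (chain_value_Reaches _ _ _ _ _ _ HB).
    induction HB as [x B E|x m B E _ IH].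
    + now apply value_sim.
    + rewrite chain_value_unfold, (next_sim x m E). exact IH.
  - rewrite (chain_value_diverge _ _ _ _ x N), chain_value_diverge; auto.
    intros [v Hv]. apply N. eapply Reaches_sim; eauto.
Qed.

End Simulation.

Lemma rd_write_all I (f : dom I SIdx -> dom I SElem) B l q :
  ArrModel I ->
  rd I (fold_right (fun q acc => wr I acc q (f q)) B l) q =
  if excluded_middle_informative (In q l) then f q else rd I B q.
Proof.
  intros (Heq&Hne&_&_). induction l as [|a l IH]; simpl.
  - destruct excluded_middle_informative as [[]|]; auto.
  - destruct (classic (a = q)) as [<-|N].
    + rewrite Heq by reflexivity.
      destruct (excluded_middle_informative (a = a \/ In a l)) as [_|n]; [reflexivity|].
      exfalso. apply n. now left.
    + rewrite Hne, IH; auto.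
      do 2 destruct excluded_middle_informative; tauto.
Qed.

Lemma NoDup_map_fst_functional {X Y : Type} (l : list (X * Y)) x y y' :
  NoDup (map fst l) -> In (x, y) l -> In (x, y') l -> y = y'.
Proof.
  induction l as [|[x0 y0] l IH]; simpl; intros Hnd Hy Hy'; [contradiction|].
  inversion Hnd as [|? ? Hnin Hnd']; subst.
  destruct Hy as [E|Hy], Hy' as [E'|Hy']; [congruence| | |auto]; exfalso; apply Hnin.
  - injection E as -> ->. change x with (fst (x, y')). now apply in_map.
  - injection E' as -> ->. change x with (fst (x, y)). now apply in_map.
Qed.

Definition flat_def (d : term * term) : Prop :=
  (exists s n, fst d = Cst s n) /\ sort_of (fst d) = sort_of (snd d) /\
  wfT (snd d) /\ ground (snd d) /\ (isName (snd d) \/ flatApp (snd d)).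

Definition rho0 (I : Interp) : env I := fun s _ => dflt I s.

(* The defined constants are solved in three stages.  Index constants follow
   their chain of definitions.  Element constants and the cells (x, q) of
   array constants x follow the chain of reads, writes, constant arrays and
   names prescribed by the definitions.  Finally an array constant x is its
   base array (reached through the writes and names in its definitions),
   overwritten at the finitely many write indices of the definitions by the
   values of its cells.  Cyclic definitions receive default values. *)
Section Solver.
Variables (I : Interp) (defs : list (term * term)).
Hypothesis I_arr : ArrModel I.
Hypothesis defs_flat : forall d, In d defs -> flat_def d.
Hypothesis defs_nodup : NoDup (map fst defs).

Definition defines (s : sort) (n : nat) (d : term * term) : bool :=
  if term_eq_dec (fst d) (Cst s n) then true else false.

Definition is_defined (s : sort) (n : nat) : bool := existsb (defines s n) defs.

Definition def_of (s : sort) (n : nat) : option term :=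
  match find (defines s n) defs with Some d => Some (snd d) | None => None end.

Lemma is_defined_spec s n : is_defined s n = true <-> In (Cst s n) (map fst defs).
Proof.
  unfold is_defined. rewrite existsb_exists. split.
  - intros [d [Hd Hk]]. unfold defines in Hk. destruct term_eq_dec as [e|]; [|discriminate].
    rewrite <- e. now apply in_map.
  - intros Hin. apply in_map_iff in Hin as [d [E Hd]]. exists d; split; auto.
    unfold defines. destruct term_eq_dec; congruence.
Qed.

Lemma def_of_Some s n t : def_of s n = Some t -> In (Cst s n, t) defs.
Proof.
  unfold def_of. destruct (find (defines s n) defs) as [[x y]|] eqn:E; [|discriminate].
  intros [= <-]. apply find_some in E as [Hin Hk]. unfold defines in Hk.
  destruct term_eq_dec; [|discriminate]. simpl in *. now subst.
Qed.

Lemma def_of_In s n t : In (Cst s n, t) defs -> def_of s n = Some t.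
Proof.
  intros Hin. unfold def_of. destruct (find (defines s n) defs) as [[x y]|] eqn:E.
  - apply find_some in E as [Hp Hk]. unfold defines in Hk.
    destruct term_eq_dec as [e|]; [|discriminate]. simpl in e. subst x.
    f_equal. eapply NoDup_map_fst_functional; eauto.
  - exfalso. eapply find_none in E; eauto. unfold defines in E. simpl in E.
    destruct term_eq_dec; congruence.
Qed.

Lemma is_defined_In s n t : In (Cst s n, t) defs -> is_defined s n = true.
Proof. intros H. apply is_defined_spec, in_map_iff. now exists (Cst s n, t). Qed.

Definition idx_name_step (t : term) : nat + dom I SIdx :=
  match t with
  | Cst SIdx m => if is_defined SIdx m then inl m else inr (cst I SIdx m)
  | _ => inr (co I SIdx (ev I (rho0 I) t))
  end.

Definition idx_step (n : nat) : nat + dom I SIdx :=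
  match def_of SIdx n with Some t => idx_name_step t | None => inr (dflt I SIdx) end.

Definition idx_val : nat -> dom I SIdx := chain_value idx_step (dflt I SIdx).

Definition cst_idx : forall s, nat -> dom I s :=
  fun s => match s as s0 return nat -> dom I s0 with
           | SIdx => fun n => if is_defined SIdx n then idx_val n else cst I SIdx n
           | SElem => cst I SElem
           | SArr => cst I SArr
           end.

Definition I_idx : Interp := reinterp I cst_idx (kdf I).

Definition idx_of (t : term) : dom I SIdx := co I SIdx (ev I_idx (rho0 I_idx) t).

Definition cell : Type := ((nat * dom I SIdx) + nat)%type.

Definition arr_step (t : term) : nat + dom I SArr :=
  match t with
  | Cst SArr m => if is_defined SArr m then inl m else inr (cst I SArr m)
  | _ => inr (co I SArr (ev I_idx (rho0 I_idx) t))
  end.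

Definition arr_cell (t : term) (q : dom I SIdx) : cell + dom I SElem :=
  match arr_step t with inl m => inl (inl (m, q)) | inr B => inr (rd I B q) end.

Definition elem_step (t : term) : cell + dom I SElem :=
  match t with
  | Cst SElem m => if is_defined SElem m then inl (inr m) else inr (cst I SElem m)
  | _ => inr (co I SElem (ev I_idx (rho0 I_idx) t))
  end.

Definition cell_step (c : cell) : cell + dom I SElem :=
  match c with
  | inl (x, q) =>
      match def_of SArr x with
      | Some (Write n1 n2 n3) =>
          if excluded_middle_informative (q = idx_of n2) then elem_step n3 else arr_cell n1 q
      | Some (CArr n) => elem_step n
      | Some t => arr_cell t q
      | None => inr (dflt I SElem)
      end
  | inr e =>
      match def_of SElem e with
      | Some (Read n1 n2) => arr_cell n1 (idx_of n2)
      | Some t => elem_step t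
      | None => inr (dflt I SElem)
      end
  end.

Definition cell_val : cell -> dom I SElem := chain_value cell_step (dflt I SElem).

Definition elem_of (t : term) : dom I SElem :=
  match elem_step t with inl c => cell_val c | inr v => v end.

Definition base_step (x : nat) : nat + dom I SArr :=
  match def_of SArr x with
  | Some (Write n1 _ _) => arr_step n1
  | Some (CArr n) => inr (ca I (elem_of n))
  | Some t => arr_step t
  | None => inr (ca I (dflt I SElem))
  end.

Definition base_arr : nat -> dom I SArr := chain_value base_step (ca I (dflt I SElem)).

Definition write_idxs : list (dom I SIdx) :=
  flat_map (fun d => match snd d with Write _ n2 _ => [idx_of n2] | _ => [] end) defs.

Definition arr_of (x : nat) : dom I SArr :=
  fold_right (fun q acc => wr I acc q (cell_val (inl (x, q)))) (base_arr x) write_idxs.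

Lemma write_idxs_In x n1 n2 n3 :
  def_of SArr x = Some (Write n1 n2 n3) -> In (idx_of n2) write_idxs.
Proof.
  intros H. apply def_of_Some in H. apply in_flat_map.
  exists (Cst SArr x, Write n1 n2 n3). simpl; auto.
Qed.

Section Generic.
Variable q : dom I SIdx.
Hypothesis q_generic : ~ In q write_idxs.

Lemma cell_step_base x m :
  base_step x = inl m -> cell_step (inl (x, q)) = inl (inl (m, q)).
Proof.
  unfold base_step, cell_step. intros E.
  destruct (def_of SArr x) as [t|] eqn:Ed; [|discriminate].
  destruct t; try (unfold arr_cell; rewrite E; reflexivity).
  - destruct excluded_middle_informative as [e|_].
    + exfalso. apply q_generic. rewrite e. eapply write_idxs_In; eauto.
    + unfold arr_cell. rewrite E. reflexivity.
  - discriminate.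
Qed.

Lemma cell_val_base x B : base_step x = inr B -> cell_val (inl (x, q)) = rd I B q.
Proof.
  destruct I_arr as (_&_&_&Hroc).
  unfold cell_val. rewrite chain_value_unfold. fold cell_val.
  unfold base_step, cell_step. intros E.
  destruct (def_of SArr x) as [t|] eqn:Ed; [destruct t|];
    try (unfold arr_cell; rewrite E; reflexivity).
  - destruct excluded_middle_informative as [e|_].
    + exfalso. apply q_generic. rewrite e. eapply write_idxs_In; eauto.
    + unfold arr_cell. rewrite E. reflexivity.
  - injection E as <-. rewrite Hroc. unfold elem_of. now destruct (elem_step t).
  - injection E as <-. now rewrite Hroc.
Qed.

Lemma rd_base_arr x : rd I (base_arr x) q = cell_val (inl (x, q)).
Proof.
  symmetry. apply (chain_value_sim _ _ _ _ base_step cell_step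
    (fun x => inl (x, q)) (fun B => rd I B q)).
  - exact cell_step_base.
  - exact cell_val_base.
  - now destruct I_arr as (_&_&_&Hroc).
Qed.

End Generic.

Lemma rd_arr_of x q : rd I (arr_of x) q = cell_val (inl (x, q)).
Proof.
  unfold arr_of. rewrite rd_write_all by exact I_arr.
  destruct excluded_middle_informative; auto. now apply rd_base_arr.
Qed.

Definition cst_sol : forall s, nat -> dom I s :=
  fun s => match s as s0 return nat -> dom I s0 with
           | SIdx => cst_idx SIdx
           | SElem => fun n => if is_defined SElem n then cell_val (inr n) else cst I SElem n
           | SArr => fun n => if is_defined SArr n then arr_of n else cst I SArr n
           end.

Definition I_sol : Interp := reinterp I cst_sol (kdf I).

Lemma ev_sol_idx_name t rho : isName t -> ground t -> sort_of t = SIdx ->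
  co I SIdx (ev I_sol rho t) = idx_of t /\
  idx_of t = match idx_name_step t with inl m => idx_val m | inr v => v end.
Proof.
  intros Hn Hg Hs. destruct t; simpl in *; try contradiction.
  - subst. unfold idx_of. simpl. rewrite !co_id. unfold cst_idx.
    destruct (is_defined SIdx n); auto.
  - unfold idx_of. simpl. now rewrite !co_id.
Qed.

Lemma ev_sol_arr_name t rho : isName t -> ground t -> sort_of t = SArr ->
  co I SArr (ev I_sol rho t) = match arr_step t with inl m => arr_of m | inr B => B end.
Proof.
  intros Hn Hg Hs. destruct t; simpl in *; try contradiction; try discriminate.
  subst. rewrite co_id. simpl. now destruct (is_defined SArr n).
Qed.

Lemma ev_sol_elem_name t rho : isName t -> ground t -> sort_of t = SElem -> co I SElem (ev I_sol rho t) = elem_of t.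
Proof.
  intros Hn Hg Hs. destruct t; simpl in *; try contradiction; try discriminate.
  subst. rewrite co_id. unfold elem_of. simpl. now destruct (is_defined SElem n).
Qed.

Lemma rd_sol_arr_name t q rho : isName t -> ground t -> sort_of t = SArr ->
  rd I (co I SArr (ev I_sol rho t)) q = match arr_cell t q with inl c => cell_val c | inr v => v end.
Proof.
  intros Hn Hg Hs. rewrite (ev_sol_arr_name t rho Hn Hg Hs). unfold arr_cell.
  destruct (arr_step t); [apply rd_arr_of|reflexivity].
Qed.

Lemma def_flat s n t : In (Cst s n, t) defs ->
  sort_of t = s /\ wfT t /\ ground t /\ (isName t \/ flatApp t).
Proof. intros H. destruct (defs_flat _ H) as (_&Hs&?&?&?). auto. Qed.

Lemma sol_idx_def n t rho : In (Cst SIdx n, t) defs ->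
  cst_sol SIdx n = co I SIdx (ev I_sol rho t).
Proof.
  intros Hin. destruct (def_flat _ _ _ Hin) as (Hs&_&Hg&Hfl).
  assert (Hn : isName t) by (destruct Hfl as [|F]; auto; destruct t; try discriminate; contradiction).
  destruct (ev_sol_idx_name t rho Hn Hg Hs) as [-> ->].
  simpl. rewrite (is_defined_In _ _ _ Hin). unfold idx_val.
  rewrite chain_value_unfold. unfold idx_step. now rewrite (def_of_In _ _ _ Hin).
Qed.

Lemma sol_elem_def n t rho : In (Cst SElem n, t) defs ->
  cst_sol SElem n = co I SElem (ev I_sol rho t).
Proof.
  intros Hin. destruct (def_flat _ _ _ Hin) as (Hs&Hw&Hg&Hfl).
  simpl. rewrite (is_defined_In _ _ _ Hin). unfold cell_val. rewrite chain_value_unfold.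
  fold cell_val. unfold cell_step. rewrite (def_of_In _ _ _ Hin).
  destruct t; simpl in Hs, Hfl; try discriminate; try (simpl in Hg; contradiction).
  - rewrite (ev_sol_elem_name (Cst s n0) rho Logic.I Hg Hs). unfold elem_of.
    now destruct (elem_step (Cst s n0)).
  - destruct Hfl as [[]|[Hn1 Hn2]]. destruct Hw as (_&_&S1&S2). destruct Hg as [G1 G2].
    simpl. change (@co I_sol) with (@co I). rewrite co_id.
    destruct (ev_sol_idx_name t2 rho Hn2 G2 S2) as [-> _].
    now rewrite rd_sol_arr_name.
Qed.

Lemma sol_arr_def n t rho : In (Cst SArr n, t) defs ->
  cst_sol SArr n = co I SArr (ev I_sol rho t).
Proof.
  destruct I_arr as (Heq&Hne&Hext&Hroc).
  intros Hin. destruct (def_flat _ _ _ Hin) as (Hs&Hw&Hg&Hfl).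
  simpl. rewrite (is_defined_In _ _ _ Hin). apply Hext. intros q.
  rewrite rd_arr_of. unfold cell_val. rewrite chain_value_unfold. fold cell_val.
  unfold cell_step. rewrite (def_of_In _ _ _ Hin).
  destruct t; simpl in Hs, Hfl; try discriminate; try (simpl in Hg; contradiction).
  - now rewrite (rd_sol_arr_name (Cst s n0) q rho Logic.I Hg Hs).
  - destruct Hfl as [[]|(Hn1&Hn2&Hn3)]. destruct Hw as (_&_&_&S1&S2&S3).
    destruct Hg as (G1&G2&G3). simpl. change (@co I_sol) with (@co I). rewrite co_id.
    destruct (ev_sol_idx_name t2 rho Hn2 G2 S2) as [Hq _].
    destruct excluded_middle_informative as [e|ne].
    + rewrite Heq by now rewrite e. rewrite (ev_sol_elem_name t3 rho Hn3 G3 S3).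
      unfold elem_of. now destruct (elem_step t3).
    + rewrite Hne by (rewrite Hq; intros E; apply ne; now symmetry).
      now rewrite rd_sol_arr_name.
  - destruct Hfl as [[]|Hn]. destruct Hw as (_&S1).
    simpl. change (@co I_sol) with (@co I). rewrite co_id, Hroc, (ev_sol_elem_name t rho Hn Hg S1).
    unfold elem_of. now destruct (elem_step t).
Qed.

Lemma sol_defs d : In d defs -> forall rho, pval I_sol rho (fst d) = pval I_sol rho (snd d).
Proof.
  intros Hd rho. destruct (defs_flat d Hd) as ((s&n&Ef)&Hs&_).
  destruct d as [x t]; simpl in *; subst x.
  unfold pval. apply (existT_of_feq I_sol); auto. simpl. change (@co I_sol) with (@co I).
  destruct s; [apply sol_idx_def|apply sol_elem_def|apply sol_arr_def]; auto.
Qed.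

End Solver.

Lemma flat_defs_solvable I defs :
  ArrModel I -> (forall d, In d defs -> flat_def d) -> NoDup (map fst defs) ->
  exists c : forall s, nat -> dom I s,
    (forall s n, ~ In (Cst s n) (map fst defs) -> c s n = cst I s n) /\
    (forall d, In d defs -> forall rho,
       pval (reinterp I c (kdf I)) rho (fst d) = pval (reinterp I c (kdf I)) rho (snd d)).
Proof.
  intros HA Hd Hnd. exists (cst_sol I defs). split.
  - intros s n Hn. assert (E : is_defined defs s n = false).
    { destruct (is_defined defs s n) eqn:E; auto. apply is_defined_spec in E. contradiction. }
    destruct s; simpl; now rewrite E.
  - now apply sol_defs.
Qed.

(** * Flattening and the DisEq lemma *)

Lemma Flatten_sat I A f F :
  ArrModel I -> modelsA I A -> (forall rho, holds I rho f) -> Flatten A f F ->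
  exists I', ArrModel I' /\ modelsA I' (A ++ F).
Proof.
  intros HA HmA Hf (f'&defs&EF&Hd&Hnd&Hexp&Hfl).
  assert (Hflat : forall d, In d defs -> flat_def d).
  { intros d Hin. destruct (Hd d Hin) as ((s&n&E&_&_)&Hs&Hw&Hv).
    assert (Hfd : flatF (FEq (fst d) (snd d))).
    { apply Hfl. rewrite EF. right. apply in_map_iff. now exists d. }
    simpl in Hfd. repeat split; eauto using noVars_ground. tauto. }
  assert (Hfresh : forall s n, In (Cst s n) (map fst defs) ->
            ~ InT (Cst s n) A /\ ~ In (Cst s n) (fterms f)).
  { intros s n Hin. apply in_map_iff in Hin as [d [E Hin]].
    destruct (Hd d Hin) as ((s'&n'&E'&H1&H2)&_). rewrite E in E'. now injection E' as -> ->. }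
  destruct (flat_defs_solvable I defs HA Hflat Hnd) as (c&Hc1&Hc2).
  exists (reinterp I c (kdf I)). split; [exact HA|].
  intros g Hg rho. apply in_app_or in Hg as [Hg|Hg].
  - apply holds_reinterp; [|reflexivity|exact (HmA g Hg rho)].
    intros s n Hs. apply Hc1. intros Hin. apply (proj1 (Hfresh s n Hin)). now exists g.
  - rewrite EF in Hg. destruct Hg as [<-|Hg].
    + apply (holds_expand _ defs); auto. rewrite Hexp.
      apply holds_reinterp; [|reflexivity|exact (Hf rho)].
      intros s n Hs. apply Hc1. intros Hin. now apply (proj2 (Hfresh s n Hin)).
    + apply in_map_iff in Hg as [d [<- Hin]]. apply feq_of_existT, Hc2, Hin.
Qed.

Lemma Flatten_wf A f F : wfF f -> Flatten A f F -> forall g, In g F -> wfF g.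
Proof.
  intros Hw (f'&defs&EF&Hd&_&Hexp&_) g Hg.
  assert (Hdw : defs_wf defs).
  { intros d Hin. destruct (Hd d Hin) as ((s&n&E&_&_)&Hs&_). rewrite E in *. now split. }
  rewrite EF in Hg. destruct Hg as [<-|Hg].
  - apply (wfF_expand_rev defs); auto. now rewrite Hexp.
  - apply in_map_iff in Hg as [d [<- Hin]].
    destruct (Hd d Hin) as ((s&n&E&_&_)&Hs&Hw'&_). simpl. rewrite E in *. simpl in *. auto.
Qed.

Lemma ground_expandT_name defs t a i :
  (forall d, In d defs -> ground (snd d) /\ exists s n, fst d = Cst s n) ->
  isName t -> expandT defs t = Read a i -> ground a /\ ground i.
Proof.
  intros Hd Hn E. change (ground (Read a i)).
  destruct t; simpl in Hn; try contradiction.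
  - rewrite <- E. apply ground_expandT; simpl; auto. intros; now apply Hd.
  - rewrite expandT_Var in E; [discriminate|]. intros; now apply Hd.
  - rewrite <- E. apply ground_expandT; simpl; auto. intros; now apply Hd.
Qed.

(* k_{a,c} is interpreted once and for all, so a and c must not depend on the
   valuation.  They are ground because a flattening names both reads by fresh
   constants, whose definitions are ground. *)
Lemma Flatten_diseq_ground A a c k F :
  Flatten A (FImp (neqF a c) (neqF (Read a k) (Read c k))) F -> ground a /\ ground c.
Proof.
  intros (f'&defs&EF&Hd&_&Hexp&Hfl).
  assert (Hff : flatF f') by (apply Hfl; rewrite EF; now left).
  assert (Hdg : forall d, In d defs -> ground (snd d) /\ exists s n, fst d = Cst s n).
  { intros d Hin. destruct (Hd d Hin) as ((s&n&E&_)&_&_&Hv). eauto using noVars_ground. }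
  rewrite expand_mapF in Hexp.
  destruct f' as [| | | | | |g1 g2| |]; try discriminate.
  destruct g2 as [| | |g| | | | |]; try discriminate.
  destruct g as [| |t1 t2| | | | | |]; try discriminate.
  simpl in Hexp. injection Hexp as _ E1 E2. simpl in Hff. destruct Hff as [_ [Hn1 Hn2]].
  destruct (ground_expandT_name defs t1 a k Hdg Hn1 E1).
  destruct (ground_expandT_name defs t2 c k Hdg Hn2 E2). auto.
Qed.

Fixpoint term_size (t : term) : nat :=
  match t with
  | Read a i => S (term_size a + term_size i)
  | Write a i u => S (term_size a + term_size i + term_size u)
  | CArr v => S (term_size v)
  | KDiff a c => S (term_size a + term_size c)
  | _ => 1
  end.

Lemma term_size_subterms t u : In u (subterms t) -> term_size u <= term_size t.
Proof.
  induction t; simpl; intros Hu; destruct Hu as [Hu|Hu]; subst; simpl; try lia;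
    try contradiction; repeat (apply in_app_or in Hu; destruct Hu as [Hu|Hu]);
    try (apply IHt1 in Hu; lia); try (apply IHt2 in Hu; lia);
    try (apply IHt3 in Hu; lia); try (apply IHt in Hu; lia).
Qed.

Definition with_kdiff (N : Interp) (a c : term) (k : dom N SIdx) : Interp :=
  reinterp N (cst N)
    (fun x y => if term_eq_dec x a then if term_eq_dec y c then k else kdf N x y
                else kdf N x y).

Lemma with_kdiff_other N a c k x y :
  (x, y) <> (a, c) -> kdf (with_kdiff N a c k) x y = kdf N x y.
Proof.
  intros Hxy. simpl. destruct (term_eq_dec x a); destruct (term_eq_dec y c); subst; auto.
  congruence.
Qed.

Lemma with_kdiff_models N a c k A :
  ~ InT (KDiff a c) A -> modelsA N A -> modelsA (with_kdiff N a c k) A.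
Proof.
  intros Hk HmN g Hg rho. apply holds_reinterp; [reflexivity| |apply HmN, Hg].
  intros x y Hxy. apply with_kdiff_other. intros [= -> ->]. apply Hk. now exists g.
Qed.

Lemma ev_with_kdiff N a c k rho t :
  term_size t <= term_size a + term_size c -> ev (with_kdiff N a c k) rho t = ev N rho t.
Proof.
  intros Hs. apply ev_reinterp; [reflexivity|]. intros x y Hxy. apply with_kdiff_other.
  intros [= -> ->]. apply term_size_subterms in Hxy. simpl in Hxy. lia.
Qed.

Lemma with_kdiff_diseq N a c k rho :
  ArrModel N -> ground a -> ground c -> sort_of a = SArr -> sort_of c = SArr ->
  (forall q, rd N (co N SArr (ev N (rho0 N) a)) q <> rd N (co N SArr (ev N (rho0 N) c)) q ->
     rd N (co N SArr (ev N (rho0 N) a)) k <> rd N (co N SArr (ev N (rho0 N) c)) k) ->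
  holds (with_kdiff N a c k) rho
    (FImp (neqF a c) (neqF (Read a (KDiff a c)) (Read c (KDiff a c)))).
Proof.
  intros (_&_&Hext&_) Ga Gc Sa Sc Hk. simpl.
  rewrite !ev_with_kdiff by lia. change (@co (with_kdiff N a c k)) with (@co N).
  rewrite (ev_ground N a Ga _ (rho0 N)), (ev_ground N c Gc _ (rho0 N)), !co_id.
  destruct (term_eq_dec a a) as [_|]; [|congruence].
  destruct (term_eq_dec c c) as [_|]; [|congruence].
  intros Hne E. apply Hne. clear Hne. apply (feq_co_iff N _ _ SArr); auto.
  apply Hext. intros q. apply NNPP. intros Hq. now apply (Hk q).
Qed.

Lemma DisEq_sat N A a c F :
  ArrModel N -> modelsA N A -> InArr a A -> InArr c A -> ~ InT (KDiff a c) A ->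
  Flatten A (FImp (neqF a c) (neqF (Read a (KDiff a c)) (Read c (KDiff a c)))) F ->
  exists N', ArrModel N' /\ modelsA N' (A ++ F).
Proof.
  intros HN HmN [_ Sa] [_ Sc] Hk HF.
  destruct (Flatten_diseq_ground _ _ _ _ _ HF) as [Ga Gc].
  set (differ q := rd N (co N SArr (ev N (rho0 N) a)) q <> rd N (co N SArr (ev N (rho0 N) c)) q).
  set (k := epsilon (inhabits (dflt N SIdx)) differ).
  refine (Flatten_sat (with_kdiff N a c k) A _ F HN _ _ HF); [auto using with_kdiff_models|].
  intros rho. apply with_kdiff_diseq; auto.
  intros q Hq. apply (epsilon_spec (inhabits (dflt N SIdx)) differ). now exists q.
Qed.

(** * Soundness of the entries of [pi] *)

Definition arr_valid (f : formula) : Prop :=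
  forall N rho, ArrModel N -> holds N rho f.

(* An entry (r, c) at (a, b[i]) says that under r the arrays a and c agree
   at i.  An entry at (a, <v>) is either a step along a write (r = ⊤), which
   agrees with a off the written index, or says that a = c under r. *)
Definition entry_sound (a t : term) (r : formula) (c : term) : Prop :=
  wfT a /\ sort_of a = SArr /\ wfT c /\ sort_of c = SArr /\ wfT t /\ wfF r /\
  match t with
  | Read b i => forall N rho, ArrModel N -> holds N rho r ->
      rd N (co N SArr (ev N rho a)) (co N SIdx (ev N rho i)) =
      rd N (co N SArr (ev N rho c)) (co N SIdx (ev N rho i))
  | CArr v => (r = FTop /\ exists j u, c = Write a j u \/ a = Write c j u) \/
      (forall N rho, ArrModel N -> holds N rho r ->
         co N SArr (ev N rho a) = co N SArr (ev N rho c))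
  | _ => False
  end.

Definition pi_sound (pi : pimap) : Prop :=
  forall a t r c, pi a t = Some (r, c) -> entry_sound a t r c.

Lemma pi_sound_pi0 : pi_sound pi0.
Proof. intros a t r c H. discriminate. Qed.

Lemma pi_sound_upd pi a t r c :
  pi_sound pi -> entry_sound a t r c -> pi_sound (upd pi a t (Some (r, c))).
Proof.
  intros H He a' t' r' c' E. unfold upd in E.
  destruct (term_eq_dec a a'); [destruct (term_eq_dec t t')|]; subst; eauto.
  injection E as -> ->. auto.
Qed.

Lemma pi_sound_entry pi a t :
  pi_sound pi -> pi a t <> None -> exists r c, pi a t = Some (r, c) /\ entry_sound a t r c.
Proof. intros Hpi H. destruct (pi a t) as [[r c]|] eqn:E; [|contradiction]. eauto. Qed.

Lemma pi_sound_wf pi a t :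
  pi_sound pi -> pi a t <> None -> wfT a /\ sort_of a = SArr /\ wfT t.
Proof. intros Hpi H. destruct (pi_sound_entry pi a t Hpi H) as (r&c&_&(?&?&_&_&?&_)). auto. Qed.

Lemma holds_neqF_idx N rho i j : sort_of i = SIdx -> sort_of j = SIdx ->
  holds N rho (neqF i j) -> co N SIdx (ev N rho j) <> co N SIdx (ev N rho i).
Proof. intros Si Sj Hne E. apply Hne, (feq_co_iff N _ _ SIdx); auto. Qed.

Lemma entry_read_refl a i : wfT (Read a i) -> entry_sound a (Read a i) FTop a.
Proof. simpl. intros (?&?&?&?). repeat split; auto. Qed.

Lemma entry_row_down a j u b i : wfT (Write a j u) -> wfT (Read b i) ->
  entry_sound a (Read b i) (neqF i j) (Write a j u).
Proof.
  simpl. intros (Wa&Wj&Wu&Sa&Sj&Su) (Wb&Wi&Sb&Si). repeat split; auto; [congruence|].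
  intros N rho (_&Hne&_&_) Hij. simpl. rewrite (co_id N SArr (wr N _ _ _)), Hne; auto.
  now apply holds_neqF_idx.
Qed.

Lemma entry_row_up a j u b i : wfT (Write a j u) -> wfT (Read b i) ->
  entry_sound (Write a j u) (Read b i) (neqF i j) a.
Proof.
  simpl. intros (Wa&Wj&Wu&Sa&Sj&Su) (Wb&Wi&Sb&Si). repeat split; auto; [congruence|].
  intros N rho (_&Hne&_&_) Hij. simpl. rewrite (co_id N SArr (wr N _ _ _)), Hne; auto.
  now apply holds_neqF_idx.
Qed.

Lemma entry_read_eq a c t : wfT a -> sort_of a = SArr -> wfT c -> sort_of c = SArr ->
  wfT t -> (exists b i, t = Read b i) ->
  entry_sound c t (FEq a c) a /\ entry_sound a t (FEq a c) c.
Proof.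
  intros Wa Sa Wc Sc Wt (b&i&->). simpl in Wt.
  assert (H : forall N rho, holds N rho (FEq a c) ->
            co N SArr (ev N rho a) = co N SArr (ev N rho c)).
  { intros N rho Heq. apply (feq_co_iff N _ _ SArr) in Heq; auto. }
  split; repeat split; simpl; auto; try tauto; try congruence;
    intros N rho _ Heq; now rewrite (H N rho Heq).
Qed.

Lemma entry_carr_refl v : wfT (CArr v) -> entry_sound (CArr v) (CArr v) FTop (CArr v).
Proof. simpl. intros (?&?). repeat split; auto. Qed.

Lemma entry_cow_down a j u v : wfT (Write a j u) -> wfT (CArr v) ->
  entry_sound a (CArr v) FTop (Write a j u).
Proof.
  simpl. intros (?&?&?&?&?&?) (?&?). repeat split; auto. left. split; eauto.
Qed.

Lemma entry_cow_up a j u v : wfT (Write a j u) -> wfT (CArr v) ->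
  entry_sound (Write a j u) (CArr v) FTop a.
Proof.
  simpl. intros (?&?&?&?&?&?) (?&?). repeat split; auto. left. split; eauto.
Qed.

Lemma entry_carr_eq a c v : wfT a -> sort_of a = SArr -> wfT c -> sort_of c = SArr ->
  wfT (CArr v) -> entry_sound c (CArr v) (FEq a c) a /\ entry_sound a (CArr v) (FEq a c) c.
Proof.
  intros Wa Sa Wc Sc Wv. simpl in Wv.
  split; repeat split; simpl; auto; try tauto; try congruence; right;
    intros N rho _ Heq; apply (feq_co_iff N _ _ SArr) in Heq; auto.
Qed.

Lemma Reason_read_sound pi a t R : pi_sound pi -> Reason pi a t R ->
  forall b i, t = Read b i ->
  wfF R /\ forall N rho, ArrModel N -> holds N rho R ->
    rd N (co N SArr (ev N rho a)) (co N SIdx (ev N rho i)) =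
    rd N (co N SArr (ev N rho b)) (co N SIdx (ev N rho i)).
Proof.
  intros Hpi HR. induction HR as [a t Hn Hb|a t r c R E Hnb HR IH]; intros b i ->.
  - split; [simpl; auto|]. destruct Hb as [Hb|[i' Hb]].
    + exfalso. destruct (pi_sound_wf pi a _ Hpi Hn) as (_&Hs&_). subst. discriminate.
    + injection Hb as -> ->. auto.
  - destruct (IH b i eq_refl) as [Hw IH']. destruct (Hpi _ _ _ _ E) as (_&_&_&_&_&Hwr&Hm).
    split; [simpl; auto|]. intros N rho HN [H1 H2]. rewrite (Hm N rho HN H2). auto.
Qed.

(* The updated indices are exactly where a write may have separated the array
   from the constant array <v>. *)
Lemma Reason_carr_sound pi a t S : pi_sound pi -> UpdIdx pi a t S ->
  forall v, t = CArr v -> forall R, Reason pi a t R ->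
  wfF R /\ (forall k, In k S -> wfT k /\ sort_of k = SIdx) /\
  forall N rho, ArrModel N -> holds N rho R ->
    forall q, (forall k, In k S -> q <> co N SIdx (ev N rho k)) ->
    rd N (co N SArr (ev N rho a)) q = co N SElem (ev N rho v).
Proof.
  intros Hpi HU. induction HU as [a t Hn Ea|a t b j u S E Hne Hb HU IH|a t r c S E Hne Hnw HU IH];
    intros v -> R HR.
  - inversion HR as [? ? _ _|? ? ? ? ? _ Hnb]; subst.
    + split; [simpl; auto|]. split; [intros k []|].
      intros N rho (_&_&_&Hroc) _ q _. simpl. now rewrite co_id, Hroc.
    + exfalso. apply Hnb. now left.
  - inversion HR as [? ? _ Hb'|? ? r c R' E' _ HR']; subst.
    + exfalso. destruct Hb' as [Hb'|[i Hb']]; [congruence|discriminate].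
    + rewrite E in E'. injection E' as <- <-.
      destruct (IH v eq_refl R' HR') as (Hw&Hk&Hs).
      destruct (Hpi _ _ _ _ E) as (Hwa&Hsa&Hwb&Hsb&_&_&_).
      split; [simpl; auto|]. split.
      * intros k [<-|Hk']; auto. destruct Hb as [-> | ->]; simpl in *; intuition.
      * intros N rho HN [H1 _] q Hq. pose proof HN as (_&Hrow&_&_).
        assert (Hqj : q <> co N SIdx (ev N rho j)) by (apply Hq; now left).
        specialize (Hs N rho HN H1 q (fun k Hk => Hq k (or_intror Hk))).
        destruct Hb as [-> | ->]; simpl in *; rewrite co_id in *; rewrite Hrow in *; auto.
  - inversion HR as [? ? _ Hb'|? ? r' c' R' E' _ HR']; subst.
    + exfalso. destruct Hb' as [Hb'|[i Hb']]; [congruence|discriminate].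
    + rewrite E in E'. injection E' as <- <-.
      destruct (IH v eq_refl R' HR') as (Hw&Hk&Hs).
      destruct (Hpi _ _ _ _ E) as (_&_&_&_&_&Hwr&[Hm|Hm]); [contradiction|].
      split; [simpl; auto|]. split; [exact Hk|].
      intros N rho HN [H1 H2] q Hq. rewrite (Hm N rho HN H2). auto.
Qed.

Lemma maxv_freshv S k : In k S -> maxv k <= freshv S.
Proof.
  induction S as [|t S IH]; simpl; intros Hk; [contradiction|].
  destruct Hk as [<-|Hk]; [lia|]. specialize (IH Hk). lia.
Qed.

Lemma holds_bigand N rho l : holds N rho (bigand l) -> forall g, In g l -> holds N rho g.
Proof.
  induction l; simpl; intros H g Hg; [contradiction|]. destruct H, Hg; subst; auto.
Qed.

Lemma wfF_bigand l : (forall g, In g l -> wfF g) -> wfF (bigand l).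
Proof. induction l; simpl; auto. Qed.

Lemma holds_exdiff N rho S : holds N rho (exdiff S) ->
  exists d, forall k, In k S -> d <> co N SIdx (ev N rho k).
Proof.
  unfold exdiff. simpl. intros [d Hd]. exists d. intros k Hk E.
  apply (holds_bigand _ _ _ Hd (FNot (FEq (Var SIdx (freshv S)) k))).
  - apply in_map_iff. eauto.
  - simpl. rewrite upd_env_eq, ev_upd_env_fresh by now apply maxv_freshv. exact E.
Qed.

Lemma wfF_exdiff S : (forall k, In k S -> wfT k /\ sort_of k = SIdx) -> wfF (exdiff S).
Proof.
  intros H. unfold exdiff. simpl. apply wfF_bigand. intros g Hg.
  apply in_map_iff in Hg as [k [<- Hk]]. simpl. destruct (H k Hk). auto.
Qed.

Lemma CongR_lemma_valid pi a b i c k R1 R2 :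
  pi_sound pi -> pi a (Read b i) <> None -> pi a (Read c k) <> None ->
  Reason pi a (Read b i) R1 -> Reason pi a (Read c k) R2 ->
  let f := FImp (FAnd (FAnd R1 R2) (FEq i k)) (FEq (Read b i) (Read c k)) in
  wfF f /\ arr_valid f.
Proof.
  intros Hpi H1 H2 HR1 HR2.
  destruct (pi_sound_wf pi _ _ Hpi H1) as (_&_&(Wb&Wi&Sb&Si)).
  destruct (pi_sound_wf pi _ _ Hpi H2) as (_&_&(Wc&Wk&Sc&Sk)).
  destruct (Reason_read_sound pi a _ R1 Hpi HR1 b i eq_refl) as [WR1 Hv1].
  destruct (Reason_read_sound pi a _ R2 Hpi HR2 c k eq_refl) as [WR2 Hv2].
  split.
  - simpl. repeat split; auto. congruence.
  - intros N rho HN. simpl. intros [[HR1' HR2'] Hik]. rewrite co_id.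
    apply (feq_co_iff N _ _ SIdx) in Hik; auto.
    now rewrite <- (Hv1 N rho HN HR1'), <- (Hv2 N rho HN HR2'), Hik.
Qed.

Lemma Roc_lemma_valid pi v b i R :
  pi_sound pi -> pi (CArr v) (Read b i) <> None -> Reason pi (CArr v) (Read b i) R ->
  let f := FImp R (FEq (Read b i) v) in wfF f /\ arr_valid f.
Proof.
  intros Hpi H HR.
  destruct (pi_sound_wf pi _ _ Hpi H) as ((Wv&Sv)&_&(Wb&Wi&Sb&Si)).
  destruct (Reason_read_sound pi _ _ R Hpi HR b i eq_refl) as [WR Hv].
  split.
  - simpl. repeat split; auto.
  - intros N rho HN HR'. simpl. rewrite <- (Hv N rho HN HR'). simpl.
    rewrite !co_id. destruct HN as (_&_&_&Hroc). apply Hroc.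
Qed.

Lemma CongC_lemma_valid pi a v w S1 S2 R1 R2 :
  pi_sound pi -> pi a (CArr v) <> None -> pi a (CArr w) <> None ->
  UpdIdx pi a (CArr v) S1 -> UpdIdx pi a (CArr w) S2 ->
  Reason pi a (CArr v) R1 -> Reason pi a (CArr w) R2 ->
  let f := FImp (FAnd (FAnd R1 R2) (exdiff (S1 ++ S2))) (FEq v w) in
  wfF f /\ arr_valid f.
Proof.
  intros Hpi H1 H2 HU1 HU2 HR1 HR2.
  destruct (pi_sound_wf pi _ _ Hpi H1) as (_&_&(Wv&Sv)).
  destruct (pi_sound_wf pi _ _ Hpi H2) as (_&_&(Ww&Sw)).
  destruct (Reason_carr_sound pi a _ S1 Hpi HU1 v eq_refl R1 HR1) as (WR1&HS1&Hv1).
  destruct (Reason_carr_sound pi a _ S2 Hpi HU2 w eq_refl R2 HR2) as (WR2&HS2&Hv2).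
  split.
  - simpl. repeat split; auto; [|congruence].
    apply wfF_exdiff. intros k Hk. apply in_app_or in Hk as [Hk|Hk]; auto.
  - intros N rho HN. simpl. intros [[HR1' HR2'] Hex].
    destruct (holds_exdiff N rho _ Hex) as [d Hd].
    apply (feq_co_iff N _ _ SElem); auto.
    rewrite <- (Hv1 N rho HN HR1' d), <- (Hv2 N rho HN HR2' d); auto;
      intros k Hk; apply Hd, in_or_app; auto.
Qed.

Definition sound_config (cfg : config) : Prop :=
  match cfg with
  | Unsat => False
  | Cfg A _ pi => (forall f, In f A -> wfF f) /\ ArrSat A /\ pi_sound pi
  end.

Lemma sound_config_upd A I pi a t r c :
  sound_config (Cfg A I pi) -> entry_sound a t r c ->
  sound_config (Cfg A I (upd pi a t (Some (r, c)))).
Proof. intros (?&?&?) ?. split; [|split]; auto. now apply pi_sound_upd. Qed.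

Lemma sound_config_conflict A I pi f F :
  sound_config (Cfg A I pi) -> wfF f /\ arr_valid f -> Flatten A f F ->
  sound_config (Cfg (A ++ F) None pi0).
Proof.
  intros (Hw&(N&HN&HmN)&_) (Hwf&Hv) HF. split; [|split].
  - intros g Hg. apply in_app_or in Hg as [Hg|Hg]; auto. eapply Flatten_wf; eauto.
  - eapply Flatten_sat; eauto.
  - apply pi_sound_pi0.
Qed.

Lemma sound_config_DisEq A I pi a c F :
  sound_config (Cfg A I pi) -> InArr a A -> InArr c A -> ~ InT (KDiff a c) A ->
  Flatten A (FImp (neqF a c) (neqF (Read a (KDiff a c)) (Read c (KDiff a c)))) F ->
  sound_config (Cfg (A ++ F) None pi0).
Proof.
  intros (Hw&(N&HN&HmN)&_) Ha Hc Hk HF. split; [|split].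
  - destruct Ha as [Ha Sa], Hc as [Hc Sc].
    intros g Hg. apply in_app_or in Hg as [Hg|Hg]; auto. refine (Flatten_wf _ _ _ _ HF g Hg).
    simpl. repeat split; eauto using wfT_InT; congruence.
  - now apply (DisEq_sat N A a c F).
  - apply pi_sound_pi0.
Qed.

Lemma ArrSat_EmptySatW A : ArrSat A -> EmptySatW A.
Proof.
  intros (N&HN&HmN). exists N. split; auto. intros a i u _ rho. simpl.
  rewrite co_id. destruct HN as (Heq&_&_&_). now apply Heq.
Qed.

Lemma InArr_wf A a : (forall f, In f A -> wfF f) -> InArr a A -> wfT a /\ sort_of a = SArr.
Proof. intros Hw [Ha Sa]. eauto using wfT_InT. Qed.

Lemma step_sound c1 c2 : step c1 c2 -> sound_config c1 -> sound_config c2.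
Proof.
  intros Hs Hc. destruct Hs as [A pi J| A I pi Hunsat| A I pi a i Hin| A I pi a i u Hin
    | A I pi a j u b i _ Hw' _| A I pi a j u b i _ Hin Ha _
    | A I pi a c b i _ Ha Hc' _ Hca _| A I pi a c b i _ Ha Hc' _ Hca _
    | A I pi a b i c k R1 R2 F _ H1 H2 _ HR1 HR2 HF
    | A I pi a c F _ Ha Hc' _ Hk _ HF| A I pi v b i R F H _ HR HF| A I pi v Hin
    | A I pi a j u v S Hw' _ _ _| A I pi a j u v S Ha _ Hin _ _
    | A I pi a c v _ Ha Hc' _ Hca _| A I pi a c v _ Ha Hc' _ Hca _
    | A I pi a v w S1 S2 R1 R2 F H1 H2 _ HU1 HU2 _ HR1 HR2 HF];
    pose proof Hc as (Hw&Hsat&Hpi).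
  - exact Hc.
  - now apply Hunsat, ArrSat_EmptySatW.
  - apply sound_config_upd; auto. apply entry_read_refl. eapply wfT_InT; eauto.
  - assert (W : wfT (Write a i u)) by (eapply wfT_InT; eauto).
    apply sound_config_upd; auto. apply entry_read_refl. simpl in *. tauto.
  - destruct (pi_sound_wf pi _ _ Hpi Hw') as (?&_&?). apply sound_config_upd; auto.
    now apply entry_row_down.
  - destruct (pi_sound_wf pi _ _ Hpi Ha) as (_&_&?). apply sound_config_upd; auto.
    apply entry_row_up; auto. eapply wfT_InT; eauto.
  - destruct (InArr_wf A a Hw Ha), (InArr_wf A c Hw Hc').
    destruct (pi_sound_wf pi _ _ Hpi Hca) as (_&_&?).
    apply sound_config_upd; auto. now apply entry_read_eq; eauto.
  - destruct (InArr_wf A a Hw Ha), (InArr_wf A c Hw Hc').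
    destruct (pi_sound_wf pi _ _ Hpi Hca) as (_&_&?).
    apply sound_config_upd; auto. now apply entry_read_eq; eauto.
  - eapply sound_config_conflict, HF; eauto. eapply CongR_lemma_valid; eauto.
  - now apply (sound_config_DisEq A I pi a c F).
  - eapply sound_config_conflict, HF; eauto. eapply Roc_lemma_valid; eauto.
  - apply sound_config_upd; auto. apply entry_carr_refl. eapply wfT_InT; eauto.
  - destruct (pi_sound_wf pi _ _ Hpi Hw') as (?&_&?). apply sound_config_upd; auto.
    now apply entry_cow_down.
  - destruct (pi_sound_wf pi _ _ Hpi Ha) as (_&_&?). apply sound_config_upd; auto.
    apply entry_cow_up; auto. eapply wfT_InT; eauto.
  - destruct (InArr_wf A a Hw Ha), (InArr_wf A c Hw Hc').
    destruct (pi_sound_wf pi _ _ Hpi Hca) as (_&_&?).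
    apply sound_config_upd; auto. now apply entry_carr_eq.
  - destruct (InArr_wf A a Hw Ha), (InArr_wf A c Hw Hc').
    destruct (pi_sound_wf pi _ _ Hpi Hca) as (_&_&?).
    apply sound_config_upd; auto. now apply entry_carr_eq.
  - eapply sound_config_conflict, HF; eauto. eapply CongC_lemma_valid; eauto.
Qed.

Lemma derives_sound c1 c2 : derives c1 c2 -> sound_config c1 -> sound_config c2.
Proof. induction 1; eauto using step_sound. Qed.

Theorem mainTheorem1 (A : list formula) :
  (forall f, In f A -> wfF f /\ flatF f) ->
  derives (Cfg A None pi0) Unsat ->
  ~ ArrSat A.
Proof.
  intros Hwf Hd Hsat.
  apply (derives_sound _ _ Hd). split; [|split]; auto using pi_sound_pi0.
  intros f Hf. now apply Hwf.
Qed.
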